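(* Let $E$ be a set and $\mathrm{Dup}(E)$ the free duplicial algebra on $E$. Let $\{E,E\}\subseteq\mathrm{Dup}(E)$ be the smallest subspace containing $E$ and closed under the bracket $\{x,y\}=x\backslash y-x/y$. Then every element of $\mathrm{Dup}(E)$ is a finite linear combination of elements $z_1/z_2/\cdots/z_n$ with $n\ge1$ and $z_1,\dots,z_n\in\{E,E\}$.
   Context: A duplicial algebra over a field $K$ is a vector space $A$ with two bilinear products $/$ and $\backslash$ satisfying $x/(y/z)=(x/y)/z$, $x/(y\backslash z)=(x/y)\backslash z$ and $x\backslash(y\backslash z)=(x\backslash y)\backslash z$ for all $x,y,z\in A$. $\mathrm{Dup}(E)$ is the free duplicial algebra generated by the set $E$ (it can be realized on planar binary rooted trees with internal vertices coloured by $E$). The product $/$ is associative, so iterated products $z_1/\cdots/z_n$ are unambiguous. *)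

From mathcomp Require Import all_boot all_algebra.
Set Implicit Arguments. Unset Strict Implicit. Unset Printing Implicit Defensive.
Import GRing.Theory.
Local Open Scope ring_scope.

Section Dup.
Variable K : fieldType.

Definition bilin (V : lmodType K) (op : V -> V -> V) : Prop :=
  (forall (a : K) (x y z : V), op (a *: x + y) z = a *: op x z + op y z) /\
  (forall (a : K) (x y z : V), op x (a *: y + z) = a *: op x y + op x z).

(* (V, ov = "/", un = "\") is a duplicial algebra *)
Definition is_duplicial (V : lmodType K) (ov un : V -> V -> V) : Prop :=
  [/\ bilin ov, bilin un,
      (forall x y z, ov x (ov y z) = ov (ov x y) z),
      (forall x y z, ov x (un y z) = un (ov x y) z) &
      (forall x y z, un x (un y z) = un (un x y) z)].

Definition dup_morphism (V : lmodType K) (ov un : V -> V -> V)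
  (W : lmodType K) (ov' un' : W -> W -> W) (phi : V -> W) : Prop :=
  [/\ (forall (a : K) x y, phi (a *: x + y) = a *: phi x + phi y),
      (forall x y, phi (ov x y) = ov' (phi x) (phi y)) &
      (forall x y, phi (un x y) = un' (phi x) (phi y))].

Definition is_free_duplicial (E : Type) (V : lmodType K) (ov un : V -> V -> V)
  (i : E -> V) : Prop :=
  is_duplicial ov un /\
  forall (W : lmodType K) (ov' un' : W -> W -> W), is_duplicial ov' un' ->
  forall f : E -> W,
    exists phi : V -> W,
      [/\ dup_morphism ov un ov' un' phi, (forall e, phi (i e) = f e) &
          forall psi : V -> W, dup_morphism ov un ov' un' psi ->
            (forall e, psi (i e) = f e) -> forall x, psi x = phi x].

Definition subspace_pred (V : lmodType K) (S : V -> Prop) : Prop :=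
  S 0 /\ forall (a : K) x y, S x -> S y -> S (a *: x + y).

Definition bracket_closure (E : Type) (V : lmodType K) (ov un : V -> V -> V)
  (i : E -> V) (v : V) : Prop :=
  forall S : V -> Prop, subspace_pred S -> (forall e, S (i e)) ->
    (forall x y, S x -> S y -> S (un x y - ov x y)) -> S v.

(* iterated product z0 / z1 / ... / zk (left-associated; "/" is associative) *)
Definition iter_over (V : lmodType K) (ov : V -> V -> V) (z0 : V) (zs : seq V) : V :=
  foldl ov z0 zs.

End Dup.

(* Let G be the span of the monomials z_0/.../z_k with all z_j in {E,E}.  By
   associativity of "/", G is closed under "/".  If m = u/y has last letter y
   and w is in {E,E}, the entanglement x/(y\z) = (x/y)\z gives
   m\w - m/w = u/{y,w} =: m', a monomial of the same length; hence G\w lies in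
   G, and a\(m/w) = (a\m)\w - a\m' proves a\m in G for a in G by induction on
   the length of m.  So G is a duplicial subalgebra containing E, and freeness
   forces it to be everything. *)

From HB Require Import structures.
From mathcomp Require Import boolp all_boot all_algebra.
Import GRing.Theory.
Local Open Scope ring_scope.
Set Implicit Arguments. Unset Strict Implicit.

Section LinearFun.
Variables (K : fieldType) (V W : lmodType K).

Definition linear_fun (f : V -> W) := forall a x y, f (a *: x + y) = a *: f x + f y.

Lemma linear_fun0 f : linear_fun f -> f 0 = 0.
Proof.
move=> lin_f; have := lin_f 1 0 0; rewrite !scale1r addr0.
by move/(congr1 (fun v => v - f 0)); rewrite subrr addrK.
Qed.

Lemma linear_funB f : linear_fun f -> forall x y, f (x - y) = f x - f y.
Proof. by move=> lin_f x y; rewrite addrC -scaleN1r lin_f scaleN1r addrC. Qed.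

End LinearFun.

Section Bilinear.
Variables (K : fieldType) (V : lmodType K) (op : V -> V -> V).
Hypothesis bil_op : bilin op.

Lemma bilin_linl y : linear_fun (op^~ y).
Proof. by case: bil_op => opDl _ a x z; apply: opDl. Qed.

Lemma bilin_linr x : linear_fun (op x).
Proof. by case: bil_op => _ opDr a y z; apply: opDr. Qed.

End Bilinear.

Section MonomialSpan.
Variables (K : fieldType) (E : Type) (V : lmodType K).
Variables (ov un : V -> V -> V) (i : E -> V).
Hypothesis dupV : is_duplicial ov un.

Local Notation inB := (bracket_closure ov un i).

Lemma bracket_closure_gen e : inB (i e).
Proof. by move=> S _ Si _. Qed.

Lemma bracket_closure_bracket x y : inB x -> inB y -> inB (un x y - ov x y).
Proof. by move=> Bx By S subS Si Sbr; apply: (Sbr); [apply: Bx | apply: By]. Qed.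

Definition monomial_span (x : V) := exists s : seq (K * (V * seq V)),
  (forall p, p \in s -> inB p.2.1 /\ (forall z, z \in p.2.2 -> inB z)) /\
  x = \sum_(p <- s) p.1 *: iter_over ov p.2.1 p.2.2.

Lemma monomial_span0 : monomial_span 0.
Proof. by exists [::]; rewrite big_nil. Qed.

Lemma monomial_spanP a x y :
  monomial_span x -> monomial_span y -> monomial_span (a *: x + y).
Proof.
case=> sx [Bsx ->] [sy [Bsy ->]].
exists (map (fun p => (a * p.1, p.2)) sx ++ sy); split.
  move=> p; rewrite mem_cat => /orP [/mapP [q qsx ->]|]; last exact: Bsy.
  exact: (Bsx q qsx).
rewrite big_cat big_map scaler_sumr; congr (_ + _).
by apply: eq_bigr => p _; rewrite scalerA.
Qed.

Lemma monomial_spanD x y :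
  monomial_span x -> monomial_span y -> monomial_span (x + y).
Proof. by move=> Sx Sy; have := monomial_spanP 1 Sx Sy; rewrite scale1r. Qed.

Lemma monomial_spanB x y :
  monomial_span x -> monomial_span y -> monomial_span (x - y).
Proof.
by move=> Sx Sy; have := monomial_spanP (-1) Sy Sx; rewrite scaleN1r addrC.
Qed.

Lemma monomial_span_monomial z0 zs :
  inB z0 -> (forall z, z \in zs -> inB z) -> monomial_span (iter_over ov z0 zs).
Proof.
move=> Bz0 Bzs; exists [:: (1, (z0, zs))]; rewrite big_seq1 scale1r.
by split=> // p; rewrite inE => /eqP ->.
Qed.

Lemma monomial_span_linear_image f x : linear_fun f ->
  (forall z0 zs, inB z0 -> (forall z, z \in zs -> inB z) ->
     monomial_span (f (iter_over ov z0 zs))) ->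
  monomial_span x -> monomial_span (f x).
Proof.
move=> lin_f Sf [s [Bs ->]]; elim: s Bs => [|p s IHs] Bs.
  by rewrite big_nil linear_fun0 //; apply: monomial_span0.
have [Bp1 Bp2] := Bs p (mem_head _ _).
rewrite big_cons lin_f; apply: monomial_spanP; first exact: Sf.
by apply: IHs => q qs; apply: Bs; rewrite inE qs orbT.
Qed.

Lemma ov_foldl x w0 ws : ov x (foldl ov w0 ws) = foldl ov (ov x w0) ws.
Proof.
have [_ _ ovA _ _] := dupV.
by elim: ws w0 => [|w ws IHws] w0 //=; rewrite IHws ovA.
Qed.

Lemma monomial_span_ov x y :
  monomial_span x -> monomial_span y -> monomial_span (ov x y).
Proof.
have [bil_ov _ _ _ _] := dupV; move=> Sx Sy.
apply: (monomial_span_linear_image (bilin_linl bil_ov y)) Sx => z0 zs Bz0 Bzs.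
apply: (monomial_span_linear_image (bilin_linr bil_ov _)) Sy => w0 ws Bw0 Bws.
rewrite /iter_over ov_foldl -foldl_rcons -foldl_cat.
apply: monomial_span_monomial => // z.
by rewrite mem_cat mem_rcons !inE => /orP [/orP [/eqP -> | /Bzs] | /Bws].
Qed.

Lemma un_monomial_bracket z0 zs w :
  inB z0 -> (forall z, z \in zs -> inB z) -> inB w ->
  exists z0' zs', [/\ inB z0', forall z, z \in zs' -> inB z, size zs' = size zs &
    un (iter_over ov z0 zs) w - ov (iter_over ov z0 zs) w = iter_over ov z0' zs'].
Proof.
have [bil_ov _ ovA ovunA _] := dupV; move=> Bz0 + Bw.
case/lastP: zs => [|u y] Bzs.
  by exists (un z0 w - ov z0 w), [::]; split=> //; apply: bracket_closure_bracket.
have By : inB y by apply: Bzs; rewrite mem_rcons mem_head.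
exists z0, (rcons u (un y w - ov y w)); split=> //.
- move=> z; rewrite mem_rcons inE => /orP [/eqP -> | zu].
    exact: bracket_closure_bracket.
  by apply: Bzs; rewrite mem_rcons inE zu orbT.
- by rewrite !size_rcons.
by rewrite /iter_over !foldl_rcons (linear_funB (bilin_linr bil_ov _)) ovunA ovA.
Qed.

Lemma monomial_span_un_letter x w :
  monomial_span x -> inB w -> monomial_span (un x w).
Proof.
have [_ bil_un _ _ _] := dupV; move=> Sx Bw.
apply: (monomial_span_linear_image (bilin_linl bil_un w)) Sx => z0 zs Bz0 Bzs.
have [z0' [zs' [Bz0' Bzs' _ bracket_eq]]] := un_monomial_bracket Bz0 Bzs Bw.
rewrite -[un _ w](subrK (ov (iter_over ov z0 zs) w)) bracket_eq.
rewrite {2}/iter_over -foldl_rcons.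
apply: monomial_spanD; first exact: monomial_span_monomial.
apply: monomial_span_monomial => // z.
by rewrite mem_rcons inE => /orP [/eqP -> | /Bzs].
Qed.

Lemma monomial_span_un_monomial a z0 zs :
  monomial_span a -> inB z0 -> (forall z, z \in zs -> inB z) ->
  monomial_span (un a (iter_over ov z0 zs)).
Proof.
have [_ bil_un _ _ unA] := dupV.
move=> Sa; have [n] := ubnP (size zs); elim: n zs z0 => // n IHn zs z0.
case/lastP: zs => [|u w] size_zs Bz0 Bzs; first exact: monomial_span_un_letter.
rewrite size_rcons ltnS in size_zs.
have Bw : inB w by apply: Bzs; rewrite mem_rcons mem_head.
have Bu z : z \in u -> inB z by move=> zu; apply: Bzs; rewrite mem_rcons inE zu orbT.
have [z0' [zs' [Bz0' Bzs' size_zs' bracket_eq]]] := un_monomial_bracket Bz0 Bu Bw.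
have -> : un a (iter_over ov z0 (rcons u w)) =
    un (un a (iter_over ov z0 u)) w - un a (iter_over ov z0' zs').
  rewrite -bracket_eq (linear_funB (bilin_linr bil_un _)) unA opprB addrC subrK.
  by rewrite /iter_over foldl_rcons.
apply: monomial_spanB; first by apply: monomial_span_un_letter => //; exact: IHn.
by apply: IHn => //; rewrite size_zs'.
Qed.

Lemma monomial_span_un x y :
  monomial_span x -> monomial_span y -> monomial_span (un x y).
Proof.
have [_ bil_un _ _ _] := dupV; move=> Sx Sy.
apply: (monomial_span_linear_image (bilin_linr bil_un x)) Sy => z0 zs.
exact: monomial_span_un_monomial.
Qed.

End MonomialSpan.

Section FreeDuplicial.
Variables (K : fieldType) (E : Type) (V : lmodType K).
Variables (ov un : V -> V -> V) (i : E -> V).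
Hypothesis freeV : is_free_duplicial ov un i.

Lemma free_duplicial_morph_eq (W : lmodType K) (ov' un' : W -> W -> W)
    (phi psi : V -> W) :
  is_duplicial ov' un' ->
  dup_morphism ov un ov' un' phi -> dup_morphism ov un ov' un' psi ->
  (forall e, phi (i e) = psi (i e)) -> phi =1 psi.
Proof.
move=> dupW mphi mpsi phi_i x.
have [theta [_ _ theta_uniq]] := freeV.2 W ov' un' dupW (psi \o i).
by rewrite (theta_uniq phi) ?(theta_uniq psi).
Qed.

Variable S : V -> Prop.
Hypotheses (subS : subspace_pred S) (S_gen : forall e, S (i e)).
Hypotheses (S_ov : forall x y, S x -> S y -> S (ov x y))
           (S_un : forall x y, S x -> S y -> S (un x y)).

Definition sub_pred : {pred V} := fun x => `[< S x >].

Lemma sub_pred_closed : GRing.subsemimod_closed sub_pred.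
Proof.
have [S0 SP] := subS.
split; [split|] => [|x y /asboolP Sx /asboolP Sy|a x /asboolP Sx]; apply/asboolP.
- exact: S0.
- by rewrite -[x]scale1r; apply: SP.
- by rewrite -[_ *: x]addr0; apply: SP.
Qed.

HB.instance Definition _ := GRing.isSubmodClosed.Build K V sub_pred sub_pred_closed.

Record subalg := SubAlg { subalg_val : V; subalg_valP : subalg_val \in sub_pred }.
HB.instance Definition _ := [isSub for subalg_val].
HB.instance Definition _ := [Choice of subalg by <:].
HB.instance Definition _ := [SubChoice_isSubLmodule of subalg by <:].

Lemma subalg_val_lin : linear_fun subalg_val.
Proof. by move=> a x y; apply: (linearP val). Qed.

Lemma subalg_op_in (op : V -> V -> V) :
    (forall x y, S x -> S y -> S (op x y)) ->
  forall x y : subalg, op (subalg_val x) (subalg_val y) \in sub_pred.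
Proof. by move=> S_op x y; apply/asboolP/S_op; apply/asboolP/subalg_valP. Qed.

Definition subalg_ov (x y : subalg) := SubAlg (subalg_op_in S_ov x y).
Definition subalg_un (x y : subalg) := SubAlg (subalg_op_in S_un x y).

Lemma subalg_bilin (op : V -> V -> V) (op' : subalg -> subalg -> subalg) :
  (forall x y, subalg_val (op' x y) = op (subalg_val x) (subalg_val y)) ->
  bilin op -> bilin op'.
Proof.
move=> op'E [opDl opDr]; split=> a x y z; apply: val_inj;
  by rewrite /= !(op'E, subalg_val_lin) ?opDl ?opDr.
Qed.

Lemma subalg_duplicial : is_duplicial subalg_ov subalg_un.
Proof.
have [bil_ov bil_un ovA ovunA unA] := freeV.1.
split=> [||x y z|x y z|x y z]; try apply: val_inj => /=.
- exact: subalg_bilin bil_ov.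
- exact: subalg_bilin bil_un.
- exact: ovA.
- exact: ovunA.
- exact: unA.
Qed.

Lemma free_duplicial_ind x : S x.
Proof.
have gen_in e : i e \in sub_pred by apply/asboolP/S_gen.
have [phi [[phi_lin phi_ov phi_un] phi_i _]] :=
  freeV.2 _ _ _ subalg_duplicial (fun e => SubAlg (gen_in e)).
have -> : x = subalg_val (phi x).
  apply: (free_duplicial_morph_eq (phi := id) (psi := subalg_val \o phi) freeV.1)
    => [||e]; last by rewrite /= phi_i.
  - by split.
  - split=> [a u v|u v|u v]; by rewrite /= ?phi_lin ?phi_ov ?phi_un ?subalg_val_lin.
by apply/asboolP/subalg_valP.
Qed.

End FreeDuplicial.

Theorem mainTheorem20 (K : fieldType) (E : Type) (V : lmodType K)
  (ov un : V -> V -> V) (i : E -> V) :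
  is_free_duplicial ov un i ->
  forall x : V,
    exists s : seq (K * (V * seq V)),
      (forall p, p \in s ->
         bracket_closure ov un i p.2.1 /\
         (forall z, z \in p.2.2 -> bracket_closure ov un i z)) /\
      x = \sum_(p <- s) p.1 *: iter_over ov p.2.1 p.2.2.
Proof.
move=> freeV; have dupV := freeV.1.
apply: (free_duplicial_ind freeV (S := monomial_span ov un i)).
- split; [exact: monomial_span0 | exact: monomial_spanP].
- move=> e; rewrite -[i e]/(iter_over ov (i e) [::]).
  by apply: monomial_span_monomial => //; apply: bracket_closure_gen.
- exact: monomial_span_ov.
- exact: monomial_span_un.
Qed.
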